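(* Let $P$ be a 6-stack whose rank $r(P)$ is a (positive) multiple of $3$. Then $P$ has a retract that is a 4-tower.
   Context: All posets are finite. For a poset $P$ and $p\in P$, the rank $r(p)$ of $p$ is the largest $m$ such that there is a chain $p_0<\dots<p_m=p$ in $P$. $P$ is ranked of rank $r(P)$ if every maximal chain has exactly $r(P)+1$ elements. For $0\le i\le j$, $P(i,j)=\{p\in P:i\le r(p)\le j\}$ (induced order). A subset $Q\subseteq P$ (induced order) is a retract of $P$ if there is an order-preserving $f:P\to Q$ with $f(q)=q$ for all $q\in Q$. The 6-crown $C_6$ is the poset on $\{x_0,x_1,x_2,y_0,y_1,y_2\}$ whose only strict comparabilities are $x_0<y_0>x_1<y_1>x_2<y_2>x_0$. A 6-stack is a ranked poset $P$ of rank $n\ge1$ such that $P(i,i+1)\cong C_6$ for each $0\le i<n$. The ordinal sum of posets $P_1,\dots,P_k$ ($k\ge1$) is their disjoint union ordered by the orders of the $P_i$ together with $p<q$ whenever $p\in P_i,q\in P_j,i<j$. A 4-tower is an ordinal sum of one or more two-element antichains. *)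

From mathcomp Require Import all_boot.
Set Implicit Arguments. Unset Strict Implicit. Unset Printing Implicit Defensive.

Section Posets.
Variable T : finType.
Variable le : rel T.

Definition is_poset : Prop :=
  [/\ forall x, le x x,
      forall x y, le x y -> le y x -> x = y &
      forall x y z, le x y -> le y z -> le x z].

Definition lt (x y : T) : bool := (x != y) && le x y.

Definition has_chain_to (p : T) (m : nat) : bool :=
  [exists s : (m.+1).-tuple T, sorted lt s && (last p s == p)].

(* r(p): the largest m such that there is a chain p_0 < ... < p_m = p
   (any such chain has m < #|T|, and m = 0 always works). *)
Definition rank (p : T) : nat :=
  \max_(m < #|T|) (if has_chain_to p m then nat_of_ord m else 0).

Definition is_chain (C : {set T}) : Prop :=
  forall x y, x \in C -> y \in C -> le x y || le y x.

Definition maximal_chain (C : {set T}) : Prop :=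
  is_chain C /\ forall D : {set T}, is_chain D -> C \subset D -> D = C.

Definition ranked_of_rank (n : nat) : Prop :=
  forall C : {set T}, maximal_chain C -> #|C| = n.+1.

Definition rank_slice (i j : nat) : {set T} :=
  [set p | i <= rank p <= j].

Definition sub_iso (S : {set T}) (U : finType) (leU : rel U) : Prop :=
  exists f : U -> T,
    [/\ injective f,
        forall u, f u \in S,
        forall x, x \in S -> exists u, f u = x &
        forall u v, le (f u) (f v) = leU u v].

Definition retract (Q : {set T}) : Prop :=
  exists f : T -> T,
    [/\ forall x, f x \in Q,
        forall x y, le x y -> le (f x) (f y) &
        forall q, q \in Q -> f q = q].
End Posets.

(* The 6-crown on bool * 'I_3: (false,i) = x_i, (true,j) = y_j;
   x_i < y_j iff j = i or j + 1 = i (mod 3), i.e.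
   x0<y0>x1<y1>x2<y2>x0. *)
Definition crown6_le (a b : bool * 'I_3) : bool :=
  (a == b) ||
  [&& ~~ a.1, b.1 & ((nat_of_ord b.2 == a.2) || ((b.2.+1 %% 3) == a.2))].

Definition six_stack (T : finType) (le : rel T) (n : nat) : Prop :=
  [/\ 1 <= n, ranked_of_rank le n &
      forall i, i < n -> sub_iso le (rank_slice le i i.+1) crown6_le].

(* ordinal sum of k two-element antichains, on 'I_k * bool *)
Definition tower_le (k : nat) (a b : 'I_k * bool) : bool :=
  (a == b) || (nat_of_ord a.1 < b.1).

Definition is_4tower (T : finType) (le : rel T) (Q : {set T}) : Prop :=
  exists k : nat, 1 <= k /\ sub_iso le Q (@tower_le k).
Example crown6_sanity :
  [/\ crown6_le (false, inord 1) (true, inord 0),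
      crown6_le (false, inord 0) (true, inord 2),
      ~~ crown6_le (false, inord 0) (true, inord 1) &
      ~~ crown6_le (true, inord 0) (false, inord 0)].
Proof. by split; rewrite /crown6_le /= ?inordK. Qed.

(* Every element x of rank i < n of a 6-stack lies below exactly two of the
   three elements of rank i+1; call the third one [miss x]. Elements two ranks
   apart are always comparable, since the two elements covering z cannot both be
   missed by x. Starting from the three minimal elements and iterating [miss]
   splits P into three threads, which identifies P with the "model stack" on
   ranks 0..n and threads {0,1,2}: (i,t) <= (j,t') iff they are equal, or
   j = i+1 and t <> t', or j >= i+2. In the model, the elements of rank
   0 mod 3 on threads 0, 1 and the elements of rank not 0 mod 3 on thread 2
   form a 4-tower, and for 3 | n an explicit order-preserving map retracts the
   whole model onto it. *)
From mathcomp Require Import all_boot zify.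
Set Implicit Arguments. Unset Strict Implicit. Unset Printing Implicit Defensive.

Ltac case_ord3 x := case: x => [[|[|[|?]]] ?] //.

Lemma crown6_up_uniq a b b' :
  ~~ crown6_le (false, a) (true, b) -> ~~ crown6_le (false, a) (true, b') -> b = b'.
Proof. by case_ord3 a; case_ord3 b; case_ord3 b' => _ _; apply/val_inj. Qed.

Lemma crown6_down_uniq b a a' :
  ~~ crown6_le (false, a) (true, b) -> ~~ crown6_le (false, a') (true, b) -> a = a'.
Proof. by case_ord3 a; case_ord3 a'; case_ord3 b => _ _; apply/val_inj. Qed.

Lemma crown6_up_exists a : exists b, ~~ crown6_le (false, a) (true, b).
Proof.
by case_ord3 a; [exists (@Ordinal 3 1 isT)|exists (@Ordinal 3 2 isT)|exists (@Ordinal 3 0 isT)].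
Qed.

Lemma crown6_down_exists b : exists a, ~~ crown6_le (false, a) (true, b).
Proof.
by case_ord3 b; [exists (@Ordinal 3 2 isT)|exists (@Ordinal 3 0 isT)|exists (@Ordinal 3 1 isT)].
Qed.

Lemma crown6_two_below b : exists a a',
  [/\ a != a', crown6_le (false, a) (true, b) & crown6_le (false, a') (true, b)].
Proof.
case_ord3 b; [exists (@Ordinal 3 0 isT), (@Ordinal 3 1 isT)
             |exists (@Ordinal 3 1 isT), (@Ordinal 3 2 isT)
             |exists (@Ordinal 3 2 isT), (@Ordinal 3 0 isT)]; by [].
Qed.

Lemma crown6_le_diag a : crown6_le (false, a) (true, a).
Proof. by rewrite /crown6_le /= eqxx. Qed.

Lemma crown6_le_bottom u a : crown6_le u (false, a) -> u = (false, a).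
Proof. by rewrite /crown6_le /= andbF orbF => /eqP. Qed.

Definition model_le (i t j t' : nat) : bool :=
  [|| (i == j) && (t == t'), (j == i.+1) && (t != t') | i.+2 <= j].

Definition in_core (i t : nat) : bool := if i %% 3 == 0 then t != 2 else t == 2.

(* Rank 3k+1 is folded onto 3k (threads 0,1) or 3k+2 (thread 2), and rank 3k+2
   onto 3k+1 or 3k+3, choosing the side that keeps every comparability; the
   image of rank 3k+2 stays below n only because 3 | n. *)
Definition retract_rank (i t : nat) : nat :=
  if i %% 3 == 0 then i
  else if i %% 3 == 1 then (if t == 2 then i else if t == 1 then i.-1 else i.+1)
  else (if t == 2 then i else if t == 0 then i.-1 else i.+1).

Definition retract_thread (i t : nat) : nat :=
  if i %% 3 == 0 then (if t == 2 then 0 else t)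
  else if t == 1 then 0 else 2.

Lemma retract_model_le i t j t' : t < 3 -> t' < 3 -> model_le i t j t' ->
  model_le (retract_rank i t) (retract_thread i t) (retract_rank j t') (retract_thread j t').
Proof. by rewrite /model_le /retract_rank /retract_thread; do ![case: ifP] => *; lia. Qed.

Lemma retract_in_core i t : t < 3 -> in_core (retract_rank i t) (retract_thread i t).
Proof. by rewrite /in_core /retract_rank /retract_thread; do ![case: ifP] => *; lia. Qed.

Lemma retract_core_id i t : t < 3 -> in_core i t ->
  retract_rank i t = i /\ retract_thread i t = t.
Proof. by rewrite /in_core /retract_rank /retract_thread; do ![case: ifP] => *; split; lia. Qed.

Lemma retract_thread_lt3 i t : t < 3 -> retract_thread i t < 3.
Proof. by rewrite /retract_thread; do ![case: ifP] => *; lia. Qed.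

Lemma retract_rank_le i t n : 3 %| n -> i <= n -> retract_rank i t <= n.
Proof. by rewrite /retract_rank; do ![case: ifP] => *; lia. Qed.

(* Level b of the tower: its two elements are (3k, 0), (3k, 1) if b = 2k, and
   (3k+1, 2), (3k+2, 2) if b = 2k+1. *)
Definition tower_rank (b : nat) (c : bool) : nat :=
  if odd b then 3 * b./2 + 1 + c else 3 * b./2.

Definition tower_thread (b : nat) (c : bool) : nat := if odd b then 2 else c.

Lemma model_le_tower b c b' c' :
  model_le (tower_rank b c) (tower_thread b c) (tower_rank b' c') (tower_thread b' c')
  = ((b == b') && (c == c')) || (b < b').
Proof. by rewrite /model_le /tower_rank /tower_thread; case: c; case: c'; do ![case: ifP] => *; lia. Qed.

Lemma tower_le_anti k (u v : 'I_k * bool) : tower_le u v -> tower_le v u -> u = v.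
Proof.
rewrite /tower_le; have [//|_ /= uv vu] := eqVneq u v.
by have := ltn_trans uv vu; rewrite ltnn.
Qed.

Lemma tower_in_core b c : in_core (tower_rank b c) (tower_thread b c).
Proof. by rewrite /in_core /tower_rank /tower_thread; case: c; do ![case: ifP] => *; lia. Qed.

Lemma tower_thread_lt3 b c : tower_thread b c < 3.
Proof. by rewrite /tower_thread; case: c; case: ifP. Qed.

Lemma tower_rank_le b c n : 3 %| n -> b < (n %/ 3).*2.+1 -> tower_rank b c <= n.
Proof. by rewrite /tower_rank; case: c; do ![case: ifP] => *; lia. Qed.

Lemma in_core_tower i t n : in_core i t -> t < 3 -> i <= n -> 3 %| n ->
  exists b c, [/\ tower_rank b c = i, tower_thread b c = t & b < (n %/ 3).*2.+1].
Proof.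
rewrite /in_core /tower_rank /tower_thread => core ht hi hn.
case: ifP core => i0 core.
- exists (i %/ 3).*2, (t == 1); rewrite odd_double doubleK.
  by case: (t =P 1) => [->|ne] /=; split; lia.
- exists (i %/ 3).*2.+1, (i %% 3 == 2); rewrite /= odd_double /= uphalf_double.
  by case: (i %% 3 =P 2) => [e|ne] /=; split; lia.
Qed.

Section Rank.
Variables (T : finType) (le : rel T).
Hypothesis le_refl : forall x, le x x.
Hypothesis le_anti : forall x y, le x y -> le y x -> x = y.
Hypothesis le_trans : forall x y z, le x y -> le y z -> le x z.
Local Notation ltT := (lt le).
Local Notation rk := (rank le).

Lemma lt_trans : transitive ltT.
Proof.
move=> y x z /andP[nxy lxy] /andP[nyz lyz]; apply/andP; split; last exact: le_trans lxy lyz.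
by apply: contra nxy => /eqP exz; subst z; rewrite (le_anti lxy lyz).
Qed.

Lemma lt_irr : irreflexive ltT.
Proof. by move=> x; rewrite /lt eqxx. Qed.

Lemma has_chain_toP p m : has_chain_to le p m <->
  exists s : seq T, [/\ size s = m.+1, sorted ltT s & last p s = p].
Proof.
split.
- by case/existsP => s /andP[so /eqP la]; exists s; rewrite size_tuple.
- case=> s [sz so la]; apply/existsP; have sz' : size s == m.+1 by apply/eqP.
  by exists (Tuple sz'); rewrite /= so la eqxx.
Qed.

Lemma sorted_lt_uniq s : sorted ltT s -> uniq s.
Proof. exact: (sorted_uniq lt_trans lt_irr). Qed.

Lemma has_chain_to_rank p m : has_chain_to le p m -> m <= rk p.
Proof.
move=> ch; have [s [sz so _]] := (has_chain_toP p m).1 ch.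
have mT : m < #|T| by rewrite -sz -(card_uniqP (sorted_lt_uniq so)) max_card.
have := @leq_bigmax _ (fun i : 'I_#|T| => if has_chain_to le p i then nat_of_ord i else 0)
  (Ordinal mT).
by rewrite /= ch.
Qed.

Lemma has_chain_to_rank_self p : has_chain_to le p (rk p).
Proof.
have ch0 : has_chain_to le p 0 by apply/has_chain_toP; exists [:: p].
have nT : 0 < #|'I_#|T| | by rewrite card_ord; apply/card_gt0P; exists p.
rewrite /rank; have [i ->] :=
  @eq_bigmax _ (fun i : 'I_#|T| => if has_chain_to le p i then nat_of_ord i else 0) nT.
by case: ifP.
Qed.

Lemma rank_lt x y : ltT x y -> rk x < rk y.
Proof.
move=> lxy; have [s [sz so la]] := (has_chain_toP _ _).1 (has_chain_to_rank_self x).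
apply: has_chain_to_rank; apply/has_chain_toP; exists (rcons s y).
rewrite size_rcons sz last_rcons; split => //.
by case: s sz so la => [//|a s] _ /= so la; rewrite rcons_path so la.
Qed.

Lemma rank_le x y : le x y -> rk x <= rk y.
Proof.
move=> lxy; have [->//|nxy] := eqVneq x y.
by apply/ltnW/rank_lt; rewrite /lt nxy.
Qed.

Lemma rank_pred y : 0 < rk y -> exists x, ltT x y /\ rk x = (rk y).-1.
Proof.
move=> y0; have [s [sz so la]] := (has_chain_toP _ _).1 (has_chain_to_rank_self y).
move: sz so la; case/lastP: s => [//|s z]; rewrite size_rcons last_rcons => -[sz] so ez; subst z.
case: s sz so => [/= sz|a s sz]; first by rewrite -sz in y0.
rewrite /= rcons_path => /andP[so lt_last].
exists (last a s); split => //.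
have : (rk y).-1 <= rk (last a s).
  by apply: has_chain_to_rank; apply/has_chain_toP; exists (a :: s); rewrite /= -sz.
by have := rank_lt lt_last; lia.
Qed.

Lemma chain_sorted_lt s : sorted ltT s -> is_chain le [set x in s].
Proof.
move=> so x y; rewrite !inE => xs ys.
have lt_nth := sorted_ltn_nth lt_trans x so.
case: (ltngtP (index x s) (index y s)) => h.
- have := lt_nth (index x s) (index y s); rewrite !inE !index_mem => /(_ xs ys h).
  by rewrite !nth_index // => /andP[_ ->].
- have := lt_nth (index y s) (index x s); rewrite !inE !index_mem => /(_ ys xs h).
  by rewrite !nth_index // => /andP[_ ->]; rewrite orbT.
- by have := congr1 (nth x s) h; rewrite !nth_index // => ->; rewrite le_refl.
Qed.

Lemma maximal_chain_ext C : is_chain le C -> exists2 D, maximal_chain le D & C \subset D.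
Proof.
pose chainb (D : {set T}) := [forall x in D, forall y in D, le x y || le y x].
have chainbP D : reflect (is_chain le D) (chainb D).
  apply: (iffP forall_inP) => [h x y xD yD | h x xD].
  - by move/forall_inP: (h x xD) => /(_ y yD).
  - by apply/forall_inP => y yD; exact: h.
move=> /chainbP chC.
have chC' : chainb C && (C \subset C) by rewrite chC subxx.
have [D /andP[chD sCD] maxD] :=
  @arg_maxnP _ C (fun D => chainb D && (C \subset D)) (fun D => #|D|) chC'.
exists D => //; split => [|E /chainbP chE sDE]; first exact/chainbP.
apply/esym/eqP; rewrite eqEcard sDE /=.
by apply: maxD; rewrite chE (subset_trans sCD sDE).
Qed.

Lemma ranked_rank_le n p : ranked_of_rank le n -> rk p <= n.
Proof.
move=> ranked; have [s [sz so _]] := (has_chain_toP _ _).1 (has_chain_to_rank_self p).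
have [D maxD sD] := maximal_chain_ext (chain_sorted_lt so).
have := subset_leq_card sD.
by rewrite (ranked _ maxD) cardsE (card_uniqP (sorted_lt_uniq so)) sz.
Qed.

Lemma crown_slice i : sub_iso le (rank_slice le i i.+1) crown6_le ->
  exists h : bool * 'I_3 -> T,
  [/\ injective h, forall a, rk (h (false, a)) = i, forall b, rk (h (true, b)) = i.+1,
      forall x, rk x = i -> exists a, x = h (false, a) &
      forall y, rk y = i.+1 -> exists b, y = h (true, b)] /\
  (forall u v, le (h u) (h v) = crown6_le u v).
Proof.
move=> [h [h_inj h_in h_onto h_le]].
have h_rank u : i <= rk (h u) <= i.+1 by have := h_in u; rewrite inE.
have rk_bot a : rk (h (false, a)) = i.
  have /andP[r1 r2] := h_rank (false, a).
  apply/eqP; rewrite eqn_leq r1 andbT leqNgt; apply/negP => r3.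
  have [x [lx rx]] := rank_pred (leq_ltn_trans (leq0n i) r3).
  have [u hu] : exists u, h u = x by apply: h_onto; rewrite inE; lia.
  by move: lx; rewrite -hu /lt h_le => /andP[+ /crown6_le_bottom eu]; rewrite eu eqxx.
have rk_top b : rk (h (true, b)) = i.+1.
  have : ltT (h (false, b)) (h (true, b)).
    by rewrite /lt h_le crown6_le_diag andbT; apply/eqP => /h_inj.
  by move/rank_lt; rewrite rk_bot; have := h_rank (true, b); lia.
exists h; split => //; split => // [x rx | y ry].
- have [[[] a] ha] : exists u, h u = x by apply: h_onto; rewrite inE; lia.
  + by move: rx; rewrite -ha rk_top; lia.
  + by exists a.
- have [[[] b] hb] : exists u, h u = y by apply: h_onto; rewrite inE; lia.
  + by exists b.
  + by move: ry; rewrite -hb rk_bot; lia.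
Qed.

Section SixStack.
Variable n : nat.
Hypothesis ranked : ranked_of_rank le n.
Hypothesis slices : forall i, i < n -> sub_iso le (rank_slice le i i.+1) crown6_le.

Let rank_le_top p : rk p <= n := ranked_rank_le p ranked.

Definition miss x := odflt x [pick y | (rk y == (rk x).+1) && ~~ le x y].

Lemma miss_spec x : rk x < n -> rk (miss x) = (rk x).+1 /\ ~~ le x (miss x).
Proof.
move=> xn; have [h [[_ rk_bot rk_top onto_bot _] h_le]] := crown_slice (slices xn).
have [a ->] := onto_bot x erefl.
rewrite /miss; case: pickP => [y /andP[/eqP -> ->] //|none].
have [b hb] := crown6_up_exists a.
by have := none (h (true, b)); rewrite rk_top rk_bot eqxx h_le hb.
Qed.

Lemma miss_uniq x y : rk x < n -> rk y = (rk x).+1 -> ~~ le x y -> y = miss x.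
Proof.
move=> xn ry nxy; have [h [[_ _ _ onto_bot onto_top] h_le]] := crown_slice (slices xn).
have [mr nxm] := miss_spec xn.
have [a ea] := onto_bot x erefl.
have [b eb] := onto_top y ry.
have [b' eb'] := onto_top (miss x) mr.
rewrite eb eb'; congr h; congr pair; apply: (@crown6_up_uniq a).
- by rewrite -h_le -eb -ea.
- by rewrite -h_le -eb' -ea.
Qed.

Lemma missed_by_uniq x x' y : rk x < n -> rk x' = rk x -> rk y = (rk x).+1 ->
  ~~ le x y -> ~~ le x' y -> x = x'.
Proof.
move=> xn rx' ry nxy nx'y.
have [h [[_ _ _ onto_bot onto_top] h_le]] := crown_slice (slices xn).
have [a ea] := onto_bot x erefl.
have [a' ea'] := onto_bot x' rx'.
have [b eb] := onto_top y ry.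
rewrite ea ea'; congr h; congr pair; apply: (@crown6_down_uniq b).
- by rewrite -h_le -eb -ea.
- by rewrite -h_le -eb -ea'.
Qed.

Lemma missed_by_exists y : 0 < rk y -> exists x, rk x = (rk y).-1 /\ ~~ le x y.
Proof.
move=> y0; have xn : (rk y).-1 < n by have := rank_le_top y; lia.
have [h [[_ rk_bot _ _ onto_top] h_le]] := crown_slice (slices xn).
have [b eb] := onto_top y (esym (ltn_predK y0)).
have [a ha] := crown6_down_exists b.
by exists (h (false, a)); rewrite rk_bot eb h_le.
Qed.

Lemma two_below z : 0 < rk z -> exists y y',
  [/\ y != y', rk y = (rk z).-1, rk y' = (rk z).-1, le y z & le y' z].
Proof.
move=> z0; have xn : (rk z).-1 < n by have := rank_le_top z; lia.
have [h [[h_inj rk_bot _ _ onto_top] h_le]] := crown_slice (slices xn).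
have [b eb] := onto_top z (esym (ltn_predK z0)).
have [a [a' [ne h1 h2]]] := crown6_two_below b.
exists (h (false, a)), (h (false, a')); rewrite !rk_bot eb !h_le h1 h2; split => //.
by apply: contra ne => /eqP /h_inj [] ->.
Qed.

Lemma le_rank_add2 x z : rk x + 2 <= rk z -> le x z.
Proof.
elim: (rk z).+1 {-2}z (ltnSn (rk z)) => // m IH {}z zm hxz.
have [y [y' [ne ry ry' ly ly']]] := two_below (ltac:(lia) : 0 < rk z).
have [lt2|le2] := ltnP (rk x + 2) (rk z).
  have lxy : le x y by apply: IH; lia.
  exact: le_trans lxy ly.
case lxy: (le x y); first exact: le_trans lxy ly.
case lxy': (le x y'); first exact: le_trans lxy' ly'.
have xn : rk x < n by have := rank_le_top z; lia.
have e1 := miss_uniq xn (ltac:(lia) : rk y = (rk x).+1) (negbT lxy).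
have e2 := miss_uniq xn (ltac:(lia) : rk y' = (rk x).+1) (negbT lxy').
by rewrite e1 e2 eqxx in ne.
Qed.

Variable base : 'I_3 -> T.
Hypothesis base_inj : injective base.
Hypothesis base_rank : forall t, rk (base t) = 0.
Hypothesis base_onto : forall x, rk x = 0 -> exists t, x = base t.

Definition thread (i : nat) (t : 'I_3) : T := iter i miss (base t).

Lemma thread_rank i t : i <= n -> rk (thread i t) = i.
Proof.
elim: i => [|i IH] hi; first exact: base_rank.
have r := IH (ltnW hi); have [/= -> _] := miss_spec (ltac:(lia) : rk (thread i t) < n).
by rewrite r.
Qed.

Lemma thread_inj i t t' : i <= n -> thread i t = thread i t' -> t = t'.
Proof.
elim: i => [|i IH] hi e; first exact: base_inj.
apply: IH; first exact: ltnW.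
have r := thread_rank t (ltnW hi); have r' := thread_rank t' (ltnW hi).
have [rm nm] := miss_spec (ltac:(lia) : rk (thread i t) < n).
have [rm' nm'] := miss_spec (ltac:(lia) : rk (thread i t') < n).
apply: (@missed_by_uniq _ _ (thread i.+1 t)) => //=; try lia.
by move: e => /= ->.
Qed.

Lemma thread_onto i x : rk x = i -> exists t, thread i t = x.
Proof.
elim: i x => [|i IH] x rx; first by have [t ->] := base_onto rx; exists t.
have [w [rw nw]] := missed_by_exists (ltac:(lia) : 0 < rk x).
rewrite rx /= in rw; have [t et] := IH w rw.
exists t; rewrite /= et; symmetry; apply: miss_uniq => //; last lia.
by have := rank_le_top x; lia.
Qed.

Lemma thread_le_succ i t t' : i < n ->
  le (thread i t) (thread i.+1 t') = (t != t' :> nat).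
Proof.
move=> hi; have ri := thread_rank t (ltnW hi); have rj := thread_rank t' hi.
have [_ nm] := miss_spec (ltac:(lia) : rk (thread i t) < n).
have [<-|ne] := eqVneq t t'; first by rewrite eqxx; exact: negbTE.
rewrite (_ : (t != t' :> nat) = true) //.
apply: contraNT ne => nle; apply/eqP/(@thread_inj i.+1) => //=.
by rewrite -(miss_uniq _ _ nle) //; lia.
Qed.

Lemma thread_le_same i t t' : i <= n -> le (thread i t) (thread i t') = (t == t' :> nat).
Proof.
move=> hi; have [<-|ne] := eqVneq t t'; first by rewrite eqxx le_refl.
rewrite (_ : (t == t' :> nat) = false); last exact: negbTE.
apply: contraNF ne => l; apply/eqP/(@thread_inj i) => //.
have [//|nx] := eqVneq (thread i t) (thread i t').
have := rank_lt (ltac:(by rewrite /lt nx l) : ltT (thread i t) (thread i t')).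
by rewrite !thread_rank // ltnn.
Qed.

Lemma thread_le i t j t' : i <= n -> j <= n ->
  le (thread i t) (thread j t') = model_le i t j t'.
Proof.
move=> hi hj; rewrite /model_le.
have [far|near] := leqP i.+2 j.
  by rewrite !orbT; apply: le_rank_add2; rewrite !thread_rank //; lia.
rewrite orbF; have [ji|] := eqVneq j i.+1.
  by rewrite ji thread_le_succ //; lia.
have [<- _|ij nji] := eqVneq i j.
  by rewrite thread_le_same //; lia.
rewrite /=; apply/negP => /rank_le; rewrite !thread_rank //; lia.
Qed.

Definition thread_index x : 'I_3 := odflt ord0 [pick t | thread (rk x) t == x].

Lemma thread_indexK x : thread (rk x) (thread_index x) = x.
Proof.
rewrite /thread_index; case: pickP => [t /eqP //|none].
by have [t et] := thread_onto (erefl (rk x)); have := none t; rewrite et eqxx.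
Qed.

Lemma thread_coords i t : i <= n -> rk (thread i t) = i /\ thread_index (thread i t) = t.
Proof.
move=> hi; have ri := thread_rank t hi; split => //.
by apply: (@thread_inj i) => //; rewrite -{1}ri thread_indexK.
Qed.

Hypothesis n_div3 : 3 %| n.

Definition core : {set T} := [set x | in_core (rk x) (thread_index x)].

Definition core_retraction x : T :=
  thread (retract_rank (rk x) (thread_index x)) (inord (retract_thread (rk x) (thread_index x))).

Lemma core_retraction_rank x : retract_rank (rk x) (thread_index x) <= n.
Proof. exact: retract_rank_le. Qed.

Lemma core_retraction_thread x :
  (inord (retract_thread (rk x) (thread_index x)) : 'I_3) = retract_thread (rk x) (thread_index x) :> nat.
Proof. by rewrite inordK // retract_thread_lt3. Qed.

Lemma retract_core : retract le core.
Proof.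
exists core_retraction; split => [x | x y lxy | x].
- rewrite inE /core_retraction.
  have [-> ->] := thread_coords (inord (retract_thread (rk x) (thread_index x)) : 'I_3)
                    (core_retraction_rank x).
  by rewrite core_retraction_thread retract_in_core.
- rewrite /core_retraction thread_le ?core_retraction_rank // !core_retraction_thread.
  apply: retract_model_le => //.
  by rewrite -thread_le ?rank_le_top // !thread_indexK.
- rewrite inE => core_x; have [e1 e2] := retract_core_id (ltn_ord _) core_x.
  rewrite /core_retraction e1.
  have -> : inord (retract_thread (rk x) (thread_index x)) = thread_index x :> 'I_3.
    by apply/val_inj; rewrite /= e2 inordK.
  exact: thread_indexK.
Qed.

Definition tower_embed (u : 'I_((n %/ 3).*2.+1) * bool) : T :=
  thread (tower_rank u.1 u.2) (inord (tower_thread u.1 u.2)).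

Lemma tower_embed_le u v : le (tower_embed u) (tower_embed v) = tower_le u v.
Proof.
case: u v => [b c] [b' c'].
rewrite /tower_embed /= thread_le ?tower_rank_le // !inordK ?tower_thread_lt3 //.
by rewrite model_le_tower /tower_le /= -pair_eqE.
Qed.

Lemma core_is_4tower : is_4tower le core.
Proof.
exists (n %/ 3).*2.+1; split => //; exists tower_embed; split => [u v e | [b c] | x | //].
- by apply: (@tower_le_anti _ u v); rewrite -tower_embed_le e le_refl.
- rewrite inE /tower_embed /=.
  have [-> ->] := thread_coords (inord (tower_thread b c) : 'I_3) (tower_rank_le c n_div3 (ltn_ord b)).
  by rewrite inordK ?tower_thread_lt3 // tower_in_core.
- rewrite inE => core_x.
  have [b [c [e1 e2 hb]]] := in_core_tower core_x (ltn_ord _) (rank_le_top x) n_div3.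
  exists (Ordinal hb, c); rewrite /tower_embed /= e1.
  have -> : inord (tower_thread b c) = thread_index x :> 'I_3 by apply/val_inj; rewrite /= e2 inordK.
  exact: thread_indexK.
- exact: tower_embed_le.
Qed.

End SixStack.
End Rank.

Theorem corollary5p10 (T : finType) (le : rel T) (n : nat) :
  is_poset le -> six_stack le n -> 3 %| n ->
  exists Q : {set T}, retract le Q /\ is_4tower le Q.
Proof.
move=> [le_refl le_anti le_trans] [n_pos ranked slices] n_div3.
have [h [[h_inj rank_bot _ onto_bot _] _]] := crown_slice le_anti le_trans (slices 0 n_pos).
have base_inj : injective (fun t => h (false, t)) by move=> a b /h_inj [].
exists (core le (fun t => h (false, t))); split.
- exact: (retract_core le_refl le_anti le_trans ranked slices base_inj rank_bot onto_bot n_div3).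
- exact: (core_is_4tower le_refl le_anti le_trans ranked slices base_inj rank_bot onto_bot n_div3).
Qed.
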